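(* Let $n$ be an odd integer with prime factorisation $n=p_{1}^{J_{1}}p_{2}^{J_{2}}\cdots p_{s}^{J_{s}}$, where $s\geq 2$, $p_1,\dots,p_s$ are distinct primes, $J_i\ge 1$, and for every $r\in\{1,\dots,s-1\}$ we have $\prod_{i=1}^{r}p_{i}^{J_{i}}<p_{r+1}$. Let $\mathcal{D}_{S_{1}},\mathcal{D}_{S_{2}}$ be subsets of $\mathcal{D}_{[n]}\setminus\{n\}$. If $\mathrm{Spec}(\mathrm{ICG}(n,\mathcal{D}_{S_{1}}))=\mathrm{Spec}(\mathrm{ICG}(n,\mathcal{D}_{S_{2}}))$, then $\mathcal{D}_{S_{1}}=\mathcal{D}_{S_{2}}$ (equivalently $S_1=S_2$).
   Context: For an integer $n\ge1$, identify $\mathbb{Z}_n$ with $[n]=\{1,\dots,n\}$ ($n$ playing the role of $0$). For a positive divisor $d$ of $n$, $G_n(d)=\{j\in[n]:\gcd(j,n)=d\}$. $\mathcal{D}_{[n]}$ denotes the set of all positive divisors of $n$. For $\mathcal{D}\subseteq\mathcal{D}_{[n]}\setminus\{n\}$, $\mathrm{ICG}(n,\mathcal{D})$ denotes the circulant graph $\mathrm{Cay}(\mathbb{Z}_n,S)$ with connection set $S=\bigcup_{d\in\mathcal{D}}G_n(d)$ (vertex set $\mathbb{Z}_n$, $g\sim h$ iff $h-g\in S$); we write $\mathcal{D}=\mathcal{D}_S$. These are exactly the integral circulant graphs on $\mathbb{Z}_n$. $\mathrm{Spec}$ denotes the multiset of eigenvalues of the adjacency matrix. *)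

From HB Require Import structures.
From mathcomp Require Import all_boot all_order all_algebra all_field.
From mathcomp Require Import finmap.
Set Implicit Arguments. Unset Strict Implicit. Unset Printing Implicit Defensive.
Import GRing.Theory Num.Theory.
Open Scope fset_scope.
From mathcomp Require Import algC.

(* Vertices of Z_n are represented by 'I_n (the residue 0 plays the role of n).
   For D a finite set of divisors of n, ICG(n,D) = Cay(Z_n, S) with
   S = \bigcup_{d in D} G_n(d) = { j in [n] : gcd(j,n) \in D }.
   g ~ h iff (h - g mod n) \in S, i.e. gcd((h - g) mod n, n) \in D
   (for h = g the residue is 0, representing n, and gcdn 0 n = n). *)
Definition ICG_adj (n : nat) (D : {fset nat}) (g h : 'I_n) : bool :=
  gcdn ((h + n - g) %% n) n \in D.

Definition ICG_adjmx (n : nat) (D : {fset nat}) : 'M[algC]_n :=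
  \matrix_(i, j) (if @ICG_adj n D i j then 1 else 0)%R.

Definition Spec (n : nat) (A : 'M[algC]_n) : algC -> nat :=
  fun lambda => mup lambda (char_poly A).

(* The largest eigenvalue of the regular graph ICG(n, D) is its degree, which is
   the sum of totient (n / d) over d in D; the spectrum therefore determines this
   sum. Splitting off the prime powers of n one at a time, the growth condition
   prod_(i < r) p_i ^ J_i < p_r (sharpened to < p_r - 1 by oddness) makes this sum
   a mixed-radix expansion with unique digits, so it determines D. *)

From HB Require Import structures.
From mathcomp Require Import all_boot all_order all_algebra all_field.
From mathcomp Require Import finmap cyclic zify.

Set Implicit Arguments.
Unset Strict Implicit.
Unset Printing Implicit Defensive.

Import Order.TTheory GRing.Theory Num.Theory.
Local Open Scope nat_scope.

Lemma sum_totient_pfactor p k : prime p -> \sum_(a < k.+1) totient (p ^ a) = p ^ k.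
Proof.
move=> p_pr; elim: k => [|k IHk]; first by rewrite big_ord_recr big_ord0.
rewrite big_ord_recr /= IHk totient_pfactor // expnS -[X in X + _]mul1n -mulnDl.
by rewrite add1n prednK ?prime_gt0.
Qed.

Section TotientDigits.
Variables (p Q : nat).
Hypotheses (p_pr : prime p) (Q_lt : Q < p.-1).

Lemma totient_pfactor_digits_lt k (T : nat -> nat) :
  (forall a, a < k -> T a <= Q) -> \sum_(a < k) totient (p ^ a) * T a < totient (p ^ k).
Proof.
move=> T_le; apply: (@leq_ltn_trans (\sum_(a < k) totient (p ^ a) * Q)).
  by apply: leq_sum => a _; rewrite leq_mul2l T_le ?orbT.
rewrite -big_distrl /=; case: k {T_le} => [|k]; first by rewrite big_ord0.
rewrite sum_totient_pfactor // totient_pfactor //= mulnC ltn_pmul2r //.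
by rewrite expn_gt0 prime_gt0.
Qed.

Lemma totient_pfactor_digits_inj k (T1 T2 : nat -> nat) :
  (forall a, a < k -> T1 a <= Q) -> (forall a, a < k -> T2 a <= Q) ->
  \sum_(a < k) totient (p ^ a) * T1 a = \sum_(a < k) totient (p ^ a) * T2 a ->
  forall a, a < k -> T1 a = T2 a.
Proof.
elim: k => [|k IHk] T1_le T2_le; first by [].
have T1_le' a : a < k -> T1 a <= Q by move/ltnW/T1_le.
have T2_le' a : a < k -> T2 a <= Q by move/ltnW/T2_le.
have lt1 := totient_pfactor_digits_lt T1_le'; have lt2 := totient_pfactor_digits_lt T2_le'.
rewrite !big_ord_recr /=; set w := totient (p ^ k) in lt1 lt2 *.
move=> eq12; have w_gt0 : 0 < w by apply: leq_ltn_trans lt1.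
have top_eq : T1 k = T2 k.
  have := congr1 (divn^~ w) eq12.
  by rewrite ![w * _]mulnC !divnDMl // !divn_small.
move: eq12; rewrite top_eq => /addIn low_eq a; rewrite ltnS leq_eqVlt.
by case/orP=> [/eqP -> // | a_lt]; apply: IHk.
Qed.

End TotientDigits.

Lemma sum_gcdn_eq n d : 0 < n -> d %| n ->
  \sum_(k < n) (gcdn k n == d) = totient (n %/ d).
Proof.
move=> n_gt0 dvd_dn; have d_gt0 : 0 < d by apply: dvdn_gt0 dvd_dn.
set e := n %/ d; have n_eq : n = e * d by rewrite divnK.
have block m : \sum_(m * d <= k < m.+1 * d) (gcdn k n == d) = coprime e m.
  rewrite mulSn addnC big_ltn; last by lia.
  (* Only the multiple m * d of the block can have gcd d with n = e * d. *)
  rewrite big1_seq ?addn0 => [|k /andP[_]]; last first.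
    rewrite mem_iota => k_in; case: eqP => // gcd_k.
    have : d %| k by rewrite -gcd_k dvdn_gcdl.
    have -> : k = m * d + (k - m * d) by lia.
    rewrite dvdn_addr ?dvdn_mull // => /dvdn_leq; lia.
  by rewrite n_eq -muln_gcdl -[X in _ == X]mul1n eqn_pmul2r // gcdnC.
have prefix m : \sum_(0 <= k < m * d) (gcdn k n == d) = \sum_(0 <= j < m) coprime e j.
  elim: m => [|m IHm]; first by rewrite !big_geq.
  by rewrite (@big_cat_nat _ _ _ (m * d)) ?leq_mul //= IHm big_nat_recr //= block.
rewrite -(big_mkord xpredT (fun k => nat_of_bool (gcdn k n == d))).
by rewrite {1}n_eq prefix totient_count_coprime.
Qed.

Lemma divn_divn n d : 0 < n -> d %| n -> n %/ (n %/ d) = d.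
Proof. by move=> n_gt0 dvd_dn; rewrite divnA // mulKn // (dvdn_gt0 n_gt0 dvd_dn). Qed.

Lemma sum_gcdn n (g : nat -> nat) : 0 < n ->
  \sum_(k < n) g (gcdn k n) = \sum_(d < n.+1 | d %| n) g (n %/ d) * totient d.
Proof.
move=> n_gt0.
transitivity (\sum_(d < n.+1 | d %| n) \sum_(k < n) (gcdn k n == n %/ d) * g (n %/ d)).
  rewrite exchange_big /=; apply: eq_bigr => k _.
  have dvd_gn : gcdn k n %| n by apply: dvdn_gcdr.
  have gn_gt0 : 0 < gcdn k n by rewrite gcdn_gt0 n_gt0 orbT.
  have cof_lt : n %/ gcdn k n < n.+1 by rewrite ltnS leq_div.
  rewrite (bigD1 (Ordinal cof_lt)) ?dvdn_div //= divn_divn // eqxx mul1n.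
  rewrite big1 ?addn0 // => d /andP[dvd_dn d_neq].
  case: eqP => [gcd_k|]; last by rewrite mul0n.
  by case/eqP: d_neq; apply: val_inj; rewrite /= gcd_k divn_divn.
apply: eq_bigr => d dvd_dn; rewrite -big_distrl /= sum_gcdn_eq ?dvdn_div //.
by rewrite divn_divn // mulnC.
Qed.

Lemma sum_divisors N (F : nat -> nat) : 0 < N ->
  \sum_(d < N.+1 | d %| N) F d = \sum_(d <- divisors N) F d.
Proof.
move=> N_gt0; rewrite -(big_mkord (dvdn^~ N)) -big_filter; apply/perm_big/uniq_perm.
- by rewrite filter_uniq ?iota_uniq.
- exact: divisors_uniq.
move=> d; rewrite mem_filter mem_iota -dvdn_divisors // add0n ltnS.
by apply/andb_idr/dvdn_leq.
Qed.

Section DivisorsOfMulPfactor.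
Variables (Q p K : nat).
Hypotheses (p_pr : prime p) (Q_gt0 : 0 < Q) (p_ndvd_Q : ~~ (p %| Q)).

Lemma dvdn_mul_pfactorP d :
  reflect (exists2 a, a <= K & exists2 m, m %| Q & d = m * p ^ a) (d %| Q * p ^ K).
Proof.
apply: (iffP idP) => [dvd_d | [a a_le [m dvd_mQ ->]]]; last first.
  by rewrite dvdn_mul // dvdn_exp2l.
have d_gt0 : 0 < d by apply: dvdn_gt0 dvd_d; rewrite muln_gt0 Q_gt0 expn_gt0 prime_gt0.
have [m cop_pm d_eq] := pfactor_coprime p_pr d_gt0.
set a := logn p d in d_eq; exists a.
  rewrite -(@dvdn_Pexp2l p) ?prime_gt1 // -(@Gauss_dvdr _ Q).
    by apply: dvdn_trans dvd_d; rewrite d_eq dvdn_mull.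
  by rewrite coprimeXl // prime_coprime.
exists m => //; rewrite -(@Gauss_dvdl _ _ (p ^ K)); last by rewrite coprimeXr // coprime_sym.
by apply: dvdn_trans dvd_d; rewrite d_eq dvdn_mulr.
Qed.

Lemma sum_dvdn_mul_pfactor (F : nat -> nat) :
  \sum_(d < (Q * p ^ K).+1 | d %| Q * p ^ K) F d =
  \sum_(a < K.+1) \sum_(m < Q.+1 | m %| Q) F (m * p ^ a).
Proof.
have N_gt0 : 0 < Q * p ^ K by rewrite muln_gt0 Q_gt0 expn_gt0 prime_gt0.
have cop_p m : m \in divisors Q -> coprime p m.
  rewrite -dvdn_divisors // prime_coprime // => dvd_mQ.
  by apply: contra p_ndvd_Q => /dvdn_trans; apply.
transitivity (\sum_(0 <= a < K.+1) \sum_(m <- divisors Q) F (m * p ^ a)); last first.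
  rewrite big_mkord; apply: eq_bigr => a _.
  by rewrite (sum_divisors (fun m => F (m * p ^ a))).
rewrite sum_divisors //.
rewrite -(big_allpairs_dep (h := fun a m => m * p ^ a)); apply/perm_big/uniq_perm.
- exact: divisors_uniq.
- apply: allpairs_uniq; rewrite ?iota_uniq ?divisors_uniq // => ? ?.
  case/allpairsP=> -[a1 m1] [_ m1_in ->]; case/allpairsP=> -[a2 m2] [_ m2_in ->] /=.
  move=> eq_am; have eq_a : a1 = a2.
    by have := congr1 (logn p) eq_am; rewrite !logn_Gauss ?cop_p // !pfactorK.
  rewrite eq_a in eq_am *; congr (_, _); apply/eqP.
  by rewrite -(@eqn_pmul2r (p ^ a2)) ?expn_gt0 ?prime_gt0 // eq_am.
move=> d; rewrite -dvdn_divisors //; apply/dvdn_mul_pfactorP/allpairsPdep.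
  by case=> a a_le [m m_dvd ->]; exists a, m; rewrite mem_iota -dvdn_divisors.
case=> a [m [a_in m_in ->]]; rewrite mem_iota in a_in.
by exists a => //; exists m; rewrite ?dvdn_divisors.
Qed.

End DivisorsOfMulPfactor.

Definition totient_weight N (c : nat -> bool) := \sum_(d < N.+1 | d %| N) c d * totient d.

Lemma totient_weight_le N c : totient_weight N c <= N.
Proof.
rewrite -[leqRHS]sum_totient_dvd; apply: leq_sum => d _.
by case: (c d); rewrite ?mul1n ?mul0n.
Qed.

Lemma totient_weight1 c : totient_weight 1 c = c 1.
Proof. by rewrite /totient_weight big_mkcond !big_ord_recr big_ord0 /=; case: (c 1). Qed.

Lemma totient_weight_mul_pfactor Q p K c : prime p -> 0 < Q -> ~~ (p %| Q) ->
  totient_weight (Q * p ^ K) c =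
  \sum_(a < K.+1) totient (p ^ a) * totient_weight Q (fun m => c (m * p ^ a)).
Proof.
move=> p_pr Q_gt0 p_ndvd_Q; rewrite /totient_weight.
rewrite (sum_dvdn_mul_pfactor K p_pr Q_gt0 p_ndvd_Q (fun d => c d * totient d)).
apply: eq_bigr => a _; rewrite big_distrr; apply: eq_bigr => m dvd_mQ /=.
rewrite totient_coprime; first by rewrite [RHS]mulnCA [totient m * _]mulnC.
rewrite coprime_sym coprimeXl // prime_coprime //.
by apply: contra p_ndvd_Q => /dvdn_trans; apply.
Qed.

(* Splitting off the last prime power expands a totient weight in the mixed radix
   totient (p ^ a), whose digits are totient weights of the prefix product Q, hence
   at most Q < p - 1: the expansion is unique and induction applies digitwise. *)
Lemma totient_weight_inj (p J : nat -> nat) r (c1 c2 : nat -> bool) :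
  (forall i, i < r -> prime (p i)) ->
  (forall i, i < r -> \prod_(j < i) p j ^ J j < (p i).-1) ->
  totient_weight (\prod_(i < r) p i ^ J i) c1 =
    totient_weight (\prod_(i < r) p i ^ J i) c2 ->
  forall d, d %| \prod_(i < r) p i ^ J i -> c1 d = c2 d.
Proof.
elim: r c1 c2 => [|r IHr] c1 c2 p_pr gap.
  rewrite big_ord0 !totient_weight1 => eq_c1 d; rewrite dvdn1 => /eqP ->.
  by case: (c1 1) (c2 1) eq_c1 => [] [].
rewrite big_ord_recr /=; set Q := \prod_(i < r) _; set P := p r; set K := J r.
have P_pr : prime P := p_pr r (ltnSn r).
have Q_lt : Q < P.-1 := gap r (ltnSn r).
have Q_gt0 : 0 < Q.
  by apply: prodn_gt0 => i; rewrite expn_gt0 prime_gt0 // p_pr // (leqW (ltn_ord i)).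
have P_ndvd_Q : ~~ (P %| Q) by apply/negP => /(dvdn_leq Q_gt0); lia.
rewrite !totient_weight_mul_pfactor // => eq_w d.
pose digit c a := totient_weight Q (fun m => c (m * P ^ a)).
have eq_digit := totient_pfactor_digits_inj P_pr Q_lt
  (fun a _ => totient_weight_le Q _ : digit c1 a <= Q)
  (fun a _ => totient_weight_le Q _ : digit c2 a <= Q) eq_w.
case/(dvdn_mul_pfactorP _ P_pr Q_gt0 P_ndvd_Q) => a a_le [m dvd_mQ ->].
apply: (IHr (fun m => c1 (m * P ^ a)) (fun m => c2 (m * P ^ a))) => // [i i_lt|i i_lt|].
- exact/p_pr/ltnW.
- exact/gap/ltnW.
- exact: eq_digit.
Qed.

Section CirculantSums.
Local Open Scope ring_scope.
Variables (V : finZmodType) (R : nmodType) (F : V -> R).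

Lemma sum_subr_shift (a : V) : \sum_x F (x - a) = \sum_x F x.
Proof. by rewrite (reindex_inj (addIr a)); apply: eq_bigr => x _; rewrite addrK. Qed.

Lemma sum_subr_reflect (a : V) : \sum_x F (a - x) = \sum_x F x.
Proof. by rewrite (reindex_inj (subrI a)); apply: eq_bigr => x _; rewrite subKr. Qed.

End CirculantSums.

Section NonnegativeMatrix.
Local Open Scope ring_scope.

Lemma eigenvalue_colsum (F : fieldType) m (A : 'M[F]_m.+1) c :
  (forall j, \sum_i A i j = c) -> eigenvalue A c.
Proof.
move=> colsum; apply/eigenvalueP; exists (const_mx 1).
  apply/rowP => j; rewrite !mxE -(colsum j) mulr1.
  by apply: eq_bigr => i _; rewrite mxE mul1r.
by apply/eqP => /rowP /(_ ord0); rewrite !mxE; apply/eqP; rewrite oner_eq0.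
Qed.

Lemma norm_eigenvalue_le_rowsum (C : numClosedFieldType) n (A : 'M[C]_n) c a :
  (forall i j, 0 <= A i j) -> (forall i, \sum_j A i j = c) -> eigenvalue A a -> `|a| <= c.
Proof.
move=> A_ge0 rowsum /eigenvalueP[v Av v_neq0].
pose S := \sum_j `|v ord0 j|.
have S_gt0 : 0 < S.
  rewrite lt_def (sumr_ge0 _ (fun j _ => normr_ge0 _)) andbT.
  apply: contra v_neq0 => /eqP S0; apply/eqP/rowP => j; rewrite mxE; apply/eqP.
  by rewrite -normr_eq0 (psumr_eq0P _ S0) // => k _; apply: normr_ge0.
have norm_Av j : `|a| * `|v ord0 j| <= \sum_i `|v ord0 i| * A i j.
  have -> : `|a| * `|v ord0 j| = `|\sum_i v ord0 i * A i j|.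
    by rewrite -normrM; have /rowP/(_ j) := Av; rewrite !mxE => ->.
  apply: le_trans (ler_norm_sum _ _ _) _; apply: ler_sum => i _.
  by rewrite normrM (ger0_norm (A_ge0 i j)).
rewrite -(ler_pM2r S_gt0) [X in X <= _]big_distrr /=.
apply: le_trans (ler_sum _ (fun j _ => norm_Av j)) _.
rewrite exchange_big /= /S big_distrr /=; apply: ler_sum => i _.
by rewrite -big_distrr /= rowsum mulrC.
Qed.

End NonnegativeMatrix.

Section IntegralCirculantDegree.
Local Open Scope ring_scope.

Definition ICG_degree n (D : {fset nat}) : nat := (\sum_(k < n) (gcdn k n \in D))%N.

Lemma ICG_adjE m D (g h : 'I_m.+1) : ICG_adj D g h = (gcdn (h - g)%R m.+1 \in D).
Proof. by rewrite /ICG_adj /= modnDmr addnBA // ltnW. Qed.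

Lemma ICG_adjmx_ge0 n D i j : 0 <= ICG_adjmx n D i j.
Proof. by rewrite mxE; case: ifP. Qed.

Lemma ICG_adjmx_rowsum m D (i : 'I_m.+1) :
  \sum_j ICG_adjmx m.+1 D i j = (ICG_degree m.+1 D)%:R.
Proof.
rewrite natr_sum -[RHS](sum_subr_shift _ i); apply: eq_bigr => j _.
by rewrite mxE ICG_adjE; case: ifP.
Qed.

Lemma ICG_adjmx_colsum m D (j : 'I_m.+1) :
  \sum_i ICG_adjmx m.+1 D i j = (ICG_degree m.+1 D)%:R.
Proof.
rewrite natr_sum -[RHS](sum_subr_reflect _ j); apply: eq_bigr => i _.
by rewrite mxE ICG_adjE; case: ifP.
Qed.

Lemma eigenvalue_Spec n (A : 'M[algC]_n) a : eigenvalue A a = (0 < Spec A a)%N.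
Proof.
by rewrite eigenvalue_root_char -XsubC_dvd ?dvdp_XsubCl // monic_neq0 ?char_poly_monic.
Qed.

Lemma ICG_degree_eigenvalue n D :
  (0 < n)%N -> eigenvalue (ICG_adjmx n D) (ICG_degree n D)%:R.
Proof. by case: n => // m _; apply/eigenvalue_colsum/ICG_adjmx_colsum. Qed.

Lemma norm_ICG_eigenvalue_le n D a :
  eigenvalue (ICG_adjmx n D) a -> `|a| <= (ICG_degree n D)%:R.
Proof.
case: n => [|m] in a *; last first.
  by apply: norm_eigenvalue_le_rowsum; [exact: ICG_adjmx_ge0 | exact: ICG_adjmx_rowsum].
by case/eigenvalueP => v _; rewrite thinmx0 eqxx.
Qed.

Lemma Spec_ICG_degree n D1 D2 : (0 < n)%N ->
  Spec (ICG_adjmx n D1) = Spec (ICG_adjmx n D2) -> ICG_degree n D1 = ICG_degree n D2.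
Proof.
move=> n_gt0 eqSpec.
have degree_le (E1 E2 : {fset nat}) :
    Spec (ICG_adjmx n E1) = Spec (ICG_adjmx n E2) -> (ICG_degree n E2 <= ICG_degree n E1)%N.
  move=> eqS; rewrite -(ler_nat algC) -[X in X <= _]normr_nat.
  apply: norm_ICG_eigenvalue_le; rewrite eigenvalue_Spec eqS -eigenvalue_Spec.
  exact: ICG_degree_eigenvalue.
by apply/eqP; rewrite eqn_leq !degree_le.
Qed.

End IntegralCirculantDegree.

Lemma ICG_degreeE n D : 0 < n -> ICG_degree n D = totient_weight n (fun d => n %/ d \in D).
Proof. exact: (sum_gcdn (fun d => nat_of_bool (d \in D))). Qed.

Lemma odd_ltn_pred m n : m < n -> odd m -> odd n -> m < n.-1.
Proof.
move=> lt_mn m_odd n_odd; have n_gt0 : 0 < n by apply: leq_ltn_trans lt_mn.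
move: lt_mn n_odd; rewrite -(prednK n_gt0) ltnS leq_eqVlt => /orP[/eqP <- /= | //].
by rewrite m_odd.
Qed.

Lemma odd_prefix_prod_ltn_pred (p J : nat -> nat) s :
  odd (\prod_(i < s) p i ^ J i) -> (forall i, i < s -> prime (p i)) ->
  (forall i, i < s -> 0 < J i) ->
  (forall r, 1 <= r <= s - 1 -> \prod_(i < r) p i ^ J i < p r) ->
  forall r, r < s -> \prod_(i < r) p i ^ J i < (p r).-1.
Proof.
move=> n_odd p_pr J_gt0 gap r r_lt.
have prefix_dvd : \prod_(i < r) p i ^ J i %| \prod_(i < s) p i ^ J i.
  rewrite -!(big_mkord xpredT (fun i => p i ^ J i)).
  by rewrite [X in _ %| X](@big_cat_nat _ _ _ r) ?(ltnW r_lt) //= dvdn_mulr.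
have p_dvd : p r %| \prod_(i < s) p i ^ J i.
  apply: (@dvdn_trans (p r ^ J r)); first by rewrite dvdn_exp ?J_gt0.
  by rewrite (bigD1 (Ordinal r_lt)) //= dvdn_mulr.
apply: odd_ltn_pred; [| exact: dvdn_odd prefix_dvd n_odd | exact: dvdn_odd p_dvd n_odd].
case: r r_lt {prefix_dvd p_dvd} => [|r] r_lt; first by rewrite big_ord0 prime_gt1 ?p_pr.
by apply: gap; lia.
Qed.

Open Scope fset_scope.

Theorem theorem1p4
  (n s : nat) (p J : nat -> nat)
  (D1 D2 : {fset nat}) :
  odd n ->
  2 <= s ->
  (forall i, i < s -> prime (p i)) ->
  (forall i j, i < s -> j < s -> p i = p j -> i = j) ->
  (forall i, i < s -> 1 <= J i) ->
  n = \prod_(i < s) p i ^ J i ->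
  (forall r, 1 <= r <= s - 1 -> \prod_(i < r) p i ^ J i < p r) ->
  (forall d, d \in D1 -> (d %| n) && (d != n)) ->
  (forall d, d \in D2 -> (d %| n) && (d != n)) ->
  Spec (ICG_adjmx n D1) = Spec (ICG_adjmx n D2) ->
  D1 = D2.
Proof.
move=> n_odd _ p_pr _ J_gt0 n_eq growth D1_dvd D2_dvd eqSpec.
have n_gt0 : 0 < n by rewrite lt0n; apply: contraTneq n_odd => ->.
have prod_odd : odd (\prod_(i < s) p i ^ J i) by rewrite -n_eq.
have gap := odd_prefix_prod_ltn_pred prod_odd p_pr J_gt0 growth.
have := Spec_ICG_degree n_gt0 eqSpec; rewrite !ICG_degreeE // {1 3}n_eq.
move=> /(totient_weight_inj p_pr gap); rewrite -n_eq => eq_cofactor.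
apply/fsetP => d; have [dvd_dn | ndvd_dn] := boolP (d %| n).
  by have := eq_cofactor _ (dvdn_div dvd_dn); rewrite divn_divn.
by apply/idP/idP => [/D1_dvd | /D2_dvd]; rewrite (negPf ndvd_dn).
Qed.
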